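(* Let $B$ be a noetherian normal integral domain and $A$ a subring of $B$. Suppose that $(\operatorname{Frac}A,\operatorname{Frac}B)\in\mathrm{EXT}$ and that there is a family $(f_i)_{i\in I}$ of elements of $A\setminus\{0\}$ such that $(A_{f_i},B_{f_i})\in\mathrm{EXT}$ for every $i\in I$ and no height-$1$ prime ideal of $B$ contains all the $f_i$. Then $(A,B)\in\mathrm{EXT}$.
   Context: For a ring $A$ and an $A$-algebra $B$, write $(A,B)\in\mathrm{EXT}$ to mean: for every derivation $\delta:A\to A$ there exists a unique derivation $D:B\to B$ such that $D\circ\varphi=\varphi\circ\delta$, where $\varphi:A\to B$ is the structure map. *)

From HB Require Import structures.
From mathcomp Require Import all_boot all_order all_algebra.
Set Implicit Arguments. Unset Strict Implicit. Unset Printing Implicit Defensive.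
Import Order.TTheory GRing.Theory Num.Theory.
Local Open Scope ring_scope.

(* All rings are realised as subrings of an ambient field K (subsets K -> Prop).
   Localizations and fraction fields of a subdomain of K are then the usual
   subsets of K, and all structure maps are inclusions. *)

Section Defs.
Variable K : fieldType.

Definition subring (S : K -> Prop) : Prop :=
  [/\ S 1, (forall x y, S x -> S y -> S (x - y)) & (forall x y, S x -> S y -> S (x * y))].

Definition FracOf (S : K -> Prop) : K -> Prop :=
  fun x => exists a c, [/\ S a, S c, c != 0 & x = a / c].

Definition Loc (S : K -> Prop) (f : K) : K -> Prop :=
  fun x => exists s n, S s /\ x = s / f ^+ n.

Definition is_derivation (S : K -> Prop) (d : K -> K) : Prop :=
  [/\ (forall x, S x -> S (d x)),
      (forall x y, S x -> S y -> d (x + y) = d x + d y) &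
      (forall x y, S x -> S y -> d (x * y) = d x * y + x * d y)].

Definition EXT (S T : K -> Prop) : Prop :=
  forall d, is_derivation S d ->
    exists D, [/\ is_derivation T D, (forall x, S x -> D x = d x) &
      (forall D', is_derivation T D' -> (forall x, S x -> D' x = d x) ->
         forall y, T y -> D' y = D y)].

Definition ideal_of (B P : K -> Prop) : Prop :=
  [/\ (forall x, P x -> B x), P 0,
      (forall x y, P x -> P y -> P (x + y)) &
      (forall r x, B r -> P x -> P (r * x))].

Definition prime_ideal_of (B P : K -> Prop) : Prop :=
  [/\ ideal_of B P, ~ P 1 &
      (forall a b, B a -> B b -> P (a * b) -> P a \/ P b)].

Definition height_one_prime (B P : K -> Prop) : Prop :=
  [/\ prime_ideal_of B P, (exists x, P x /\ x != 0) &
      (forall Q, prime_ideal_of B Q -> (exists x, Q x /\ x != 0) ->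
         (forall x, Q x -> P x) -> forall x, P x -> Q x)].

Definition noetherian (B : K -> Prop) : Prop :=
  forall I : nat -> K -> Prop,
    (forall n, ideal_of B (I n)) ->
    (forall n x, I n x -> I n.+1 x) ->
    exists N, forall m, (N <= m)%N -> forall x, I m x -> I N x.

Definition normal_domain (B : K -> Prop) : Prop :=
  forall x, FracOf B x ->
    (exists p : {poly K}, [/\ p \is monic, (forall i, B p`_i) & root p x]) ->
    B x.

End Defs.

From mathcomp Require Import all_boot all_order all_algebra.
From mathcomp Require Import ring.
From Stdlib Require Import Classical ClassicalEpsilon.
Set Implicit Arguments. Unset Strict Implicit. Unset Printing Implicit Defensive.
Import GRing.Theory.
Local Open Scope ring_scope.

(* A derivation d of A extends to Frac A by the quotient rule, hence, by
   hypothesis, uniquely to a derivation D of Frac B.  By uniqueness, D agrees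
   with the extension of d granted by (A_f, B_f) in EXT, so D maps B into
   every B_{f_i}.  It remains to see that B is the intersection of Frac B with
   the B_{f_i}.  If x is in Frac B but not in B, pick (noetherianity) y = b x
   not in B whose conductor P = {u in B | u y in B} is maximal: P is a prime
   ideal, and normality of B makes it of height one (if P y were contained in
   P, then y would be almost integral, hence integral, over B).  Some f_i lies
   outside P, whereas f_i^n x in B forces f_i^n into the conductor of x, which
   is contained in P. *)

Section Subring.
Variables (K : fieldType) (S : K -> Prop).
Hypothesis hS : subring S.

Lemma subring1 : S 1.
Proof. by case: hS. Qed.

Lemma subringB x y : S x -> S y -> S (x - y).
Proof. by case: hS => _ + _; apply. Qed.

Lemma subringM x y : S x -> S y -> S (x * y).
Proof. by case: hS => _ _; apply. Qed.

Lemma subring0 : S 0.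
Proof. by rewrite -(subrr 1); apply: subringB; apply: subring1. Qed.

Lemma subringN x : S x -> S (- x).
Proof. by move=> Sx; rewrite -sub0r; apply: subringB => //; apply: subring0. Qed.

Lemma subringD x y : S x -> S y -> S (x + y).
Proof. by move=> Sx Sy; rewrite -(opprK y); apply: subringB => //; apply: subringN. Qed.

Lemma subringX x n : S x -> S (x ^+ n).
Proof.
move=> Sx; elim: n => [|n IHn]; first by rewrite expr0; apply: subring1.
by rewrite exprS; apply: subringM.
Qed.

Lemma subring_sum (J : Type) (r : seq J) (P : pred J) (F : J -> K) :
  (forall j, S (F j)) -> S (\sum_(j <- r | P j) F j).
Proof.
by move=> SF; apply: (big_ind S) => //; [apply: subring0 | apply: subringD].
Qed.

Lemma subring_FracOf x : S x -> FracOf S x.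
Proof. by move=> Sx; exists x, 1; rewrite divr1 oner_neq0; split=> //; apply: subring1. Qed.

Lemma subring_Loc f x : S x -> Loc S f x.
Proof. by move=> Sx; exists x, 0%N; rewrite expr0 divr1. Qed.

Variable f : K.
Hypotheses (Sf : S f) (f_neq0 : f != 0).

Lemma Loc_subring : subring (Loc S f).
Proof.
have fX_neq0 n : f ^+ n != 0 by apply: expf_neq0.
split; first exact/subring_Loc/subring1.
- move=> _ _ [s [n [Ss ->]]] [s' [m [Ss' ->]]].
  exists (s * f ^+ m - s' * f ^+ n), (n + m)%N; split.
    by apply: subringB; apply: subringM => //; apply: subringX.
  by rewrite exprD; field; rewrite !fX_neq0.
- move=> _ _ [s [n [Ss ->]]] [s' [m [Ss' ->]]].
  exists (s * s'), (n + m)%N; split; first exact: subringM.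
  by rewrite exprD; field; rewrite !fX_neq0.
Qed.

Lemma Loc_FracOf x : Loc S f x -> FracOf S x.
Proof.
move=> [s [n [Ss ->]]]; exists s, (f ^+ n).
by split=> //; [apply: subringX | apply: expf_neq0].
Qed.

Lemma FracOf_Loc x : FracOf (Loc S f) x <-> FracOf S x.
Proof.
split=> [|[a [c [Sa Sc c_neq0 ->]]]]; last first.
  by exists a, c; split=> //; apply: subring_Loc.
move=> [_ [_ [[s [n [Ss ->]]] [s' [m [Ss' ->]]] c_neq0 ->]]].
have [fn fm] : f ^+ n != 0 /\ f ^+ m != 0 by split; apply: expf_neq0.
have s'_neq0 : s' != 0 by apply: contraNneq c_neq0 => ->; rewrite mul0r.
exists (s * f ^+ m), (s' * f ^+ n); split; try by apply: subringM => //; apply: subringX.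
  by rewrite mulf_neq0.
by field; rewrite fn fm s'_neq0.
Qed.

End Subring.

Lemma FracOf_mono (K : fieldType) (S T : K -> Prop) x :
  (forall y, S y -> T y) -> FracOf S x -> FracOf T x.
Proof. by move=> ST [a [c [Sa Sc c_neq0 ->]]]; exists a, c; split; auto. Qed.

Section Derivations.
Variable K : fieldType.
Implicit Types (S T : K -> Prop) (d E : K -> K).

Lemma is_derivation_eq S T d :
  (forall x, S x <-> T x) -> is_derivation S d -> is_derivation T d.
Proof.
move=> ST [dS dD dM]; split=> [x /ST Sx | x y /ST Sx /ST Sy | x y /ST Sx /ST Sy].
- exact/ST/dS.
- exact: dD.
- exact: dM.
Qed.

Lemma is_derivation_restr S T d : (forall x, S x -> T x) ->
  (forall x, S x -> S (d x)) -> is_derivation T d -> is_derivation S d.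
Proof. by move=> ST dS [_ dD dM]; split=> // x y /ST Tx /ST Ty; [apply: dD | apply: dM]. Qed.

Lemma derivation1 S d : subring S -> is_derivation S d -> d 1 = 0.
Proof.
move=> hS [_ _ dM]; have := dM 1 1 (subring1 hS) (subring1 hS).
by rewrite !mul1r mulr1 => /eqP; rewrite eq_sym -subr_eq0 addrK => /eqP.
Qed.

Definition quot_der d (a c : K) := (d a * c - a * d c) / c ^+ 2.

Lemma quot_der_eq S d a c a' c' : is_derivation S d ->
  S a -> S c -> c != 0 -> S a' -> S c' -> c' != 0 -> a / c = a' / c' ->
  quot_der d a c = quot_der d a' c'.
Proof.
move=> [_ _ dM] Sa Sc c_neq0 Sa' Sc' c'_neq0 e.
have cross : a * c' = a' * c by rewrite -[a](divfK c_neq0) e; field.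
have := congr1 d cross; rewrite !dM // => dcross.
have da' : d a' = (d a * c' + a * d c' - a' * d c) / c by rewrite dcross addrK mulfK.
have a'E : a' = a * c' / c by rewrite cross mulfK.
by rewrite /quot_der da' a'E; field; rewrite c_neq0 c'_neq0.
Qed.

(* By [quot_der_eq], the value does not depend on the chosen representative. *)
Definition frac_der S d x :=
  let ac := epsilon (inhabits (0, 1))
    (fun ac : K * K => [/\ S ac.1, S ac.2, ac.2 != 0 & x = ac.1 / ac.2]) in
  quot_der d ac.1 ac.2.

Variables (S : K -> Prop) (d : K -> K).
Hypotheses (hS : subring S) (hd : is_derivation S d).

Lemma frac_derE a c : S a -> S c -> c != 0 -> frac_der S d (a / c) = quot_der d a c.
Proof.
move=> Sa Sc c_neq0; rewrite /frac_der.
case: (epsilon_spec (inhabits (0, 1))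
  (fun ac : K * K => [/\ S ac.1, S ac.2, ac.2 != 0 & a / c = ac.1 / ac.2])).
  by exists (a, c).
by move=> S1 S2 nz2 e; symmetry; apply: (quot_der_eq hd Sa Sc c_neq0 S1 S2 nz2 e).
Qed.

Lemma frac_der_id x : S x -> frac_der S d x = d x.
Proof.
move=> Sx; rewrite -[x]divr1 frac_derE ?oner_neq0 //; last exact: subring1.
by rewrite /quot_der (derivation1 hS hd) expr1n !divr1 mulr1 mulr0 subr0.
Qed.

Lemma frac_der_is_derivation : is_derivation (FracOf S) (frac_der S d).
Proof.
have [dS dD dM] := hd.
split.
- move=> _ [a [c [Sa Sc c_neq0 ->]]]; rewrite frac_derE //.
  exists (d a * c - a * d c), (c ^+ 2); split; rewrite ?expf_neq0 //.
    by apply: (subringB hS); apply: (subringM hS); auto.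
  exact: subringX.
- move=> _ _ [a [c [Sa Sc c_neq0 ->]]] [a' [c' [Sa' Sc' c'_neq0 ->]]].
  have -> : a / c + a' / c' = (a * c' + a' * c) / (c * c').
    by field; rewrite c_neq0 c'_neq0.
  rewrite !frac_derE ?mulf_neq0 //; try by apply: subringM.
    rewrite /quot_der dD; try by apply: subringM.
    by rewrite !dM //; field; rewrite c_neq0 c'_neq0.
  by apply: (subringD hS); apply: subringM.
- move=> _ _ [a [c [Sa Sc c_neq0 ->]]] [a' [c' [Sa' Sc' c'_neq0 ->]]].
  have -> : a / c * (a' / c') = (a * a') / (c * c') by field; rewrite c_neq0 c'_neq0.
  rewrite !frac_derE ?mulf_neq0 //; try by apply: subringM.
  by rewrite /quot_der !dM //; field; rewrite c_neq0 c'_neq0.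
Qed.

Lemma frac_der_unique T E : (forall x, FracOf S x -> T x) -> is_derivation T E ->
  (forall x, S x -> E x = d x) -> forall x, FracOf S x -> E x = frac_der S d x.
Proof.
move=> FT [_ _ EM] Ed _ [a [c [Sa Sc c_neq0 ->]]].
have Tac : T (a / c) by apply: FT; exists a, c.
have := EM _ _ Tac (FT _ (subring_FracOf hS Sc)).
rewrite divfK // (Ed _ Sa) (Ed _ Sc) frac_derE // /quot_der => ->.
by field; rewrite c_neq0.
Qed.

Lemma frac_der_Loc f x : S f -> f != 0 -> Loc S f x -> Loc S f (frac_der S d x).
Proof.
move=> Sf f_neq0 [s [n [Ss ->]]].
have [dS _ _] := hd.
rewrite frac_derE ?expf_neq0 //; last exact: subringX.
rewrite /quot_der -exprM.
exists (d s * f ^+ n - s * d (f ^+ n)), (n * 2)%N; split=> //.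
have Sfn := subringX hS n Sf.
by apply: (subringB hS); apply: (subringM hS); auto.
Qed.

End Derivations.

Section FractionExtension.
Variables (K : fieldType) (A B : K -> Prop) (d : K -> K).
Hypotheses (hA : subring A) (hB : subring B) (AB : forall x, A x -> B x).
Hypothesis hd : is_derivation A d.

Definition unique_frac_extension D :=
  [/\ is_derivation (FracOf B) D, (forall a, A a -> D a = d a) &
      forall E, is_derivation (FracOf B) E -> (forall a, A a -> E a = d a) ->
        forall y, FracOf B y -> E y = D y].

Lemma EXT_FracOf_extension :
  EXT (FracOf A) (FracOf B) -> exists D, unique_frac_extension D.
Proof.
move=> hEXT; have dA := frac_der_is_derivation hA hd.
have [D [hD DdA Duniq]] := hEXT _ dA.
exists D; split=> // [a Aa | E hE Ed].
  by rewrite DdA ?frac_der_id //; apply: subring_FracOf.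
apply: Duniq => //; apply: (frac_der_unique hA hd _ hE Ed) => x.
exact: FracOf_mono.
Qed.

Variable D : K -> K.
Hypothesis hD : unique_frac_extension D.

Lemma unique_frac_extension_Loc_stable f : A f -> f != 0 -> EXT (Loc A f) (Loc B f) ->
  forall y, Loc B f y -> Loc B f (D y).
Proof.
move=> Af f_neq0 hEXT y By.
have Bf := AB Af; have [_ _ Duniq] := hD.
have dLoc : is_derivation (Loc A f) (frac_der A d).
  apply: is_derivation_restr (frac_der_is_derivation hA hd).
    by move=> x; apply: Loc_FracOf.
  by move=> x; apply: frac_der_Loc.
have [Df [hDf Dfd _]] := hEXT _ dLoc.
have hLB := Loc_subring hB Bf f_neq0.
have hE := is_derivation_eq (fun x => FracOf_Loc hB Bf f_neq0 x)
  (frac_der_is_derivation hLB hDf).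
have Ed a : A a -> frac_der (Loc B f) Df a = d a.
  move=> Aa; rewrite (frac_der_id hLB hDf (subring_Loc f (AB Aa))).
  by rewrite Dfd ?(frac_der_id hA hd Aa) //; apply: subring_Loc.
rewrite -(Duniq _ hE Ed y (Loc_FracOf hB Bf f_neq0 By)) frac_der_id //.
by have [DfLoc _ _] := hDf; apply: DfLoc.
Qed.

End FractionExtension.

Definition conductor (K : fieldType) (B : K -> Prop) (y u : K) := B u /\ B (u * y).

Section Conductor.
Variables (K : fieldType) (B : K -> Prop).
Hypothesis hB : subring B.

Lemma conductor_ideal y : ideal_of B (conductor B y).
Proof.
split=> [u [] // | | u v [Bu Buy] [Bv Bvy] | r u Br [Bu Buy]].
- by rewrite /conductor mul0r; split; apply: subring0.
- by split; rewrite ?mulrDl; apply: subringD.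
- by split; rewrite -?mulrA; apply: subringM.
Qed.

Lemma conductor_mull u y w : B u -> conductor B y w -> conductor B (u * y) w.
Proof. by move=> Bu [Bw Bwy]; split; rewrite // mulrCA; apply: subringM. Qed.

Lemma prime_ideal_pow Q a k : prime_ideal_of B Q -> B a -> Q (a ^+ k) -> Q a.
Proof.
move=> [_ nQ1 Qprime] Ba; elim: k => [|k IHk]; first by rewrite expr0.
by rewrite exprS => /(Qprime _ _ Ba (subringX hB k Ba)) [].
Qed.

Lemma noetherian_max (T : Type) (P : T -> Prop) (J : T -> K -> Prop) t0 :
  noetherian B -> (forall t, ideal_of B (J t)) -> P t0 ->
  exists t, P t /\ forall t', P t' -> (forall x, J t x -> J t' x) ->
     forall x, J t' x -> J t x.
Proof.
move=> hN hJ Pt0; apply: NNPP => nomax.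
have grow (t : {t | P t}) : {t' : {t | P t} |
    (forall x, J (sval t) x -> J (sval t') x) /\
    exists x, J (sval t') x /\ ~ J (sval t) x}.
  case: t => t Pt; apply: constructive_indefinite_description.
  apply: NNPP => nogrow; apply: nomax; exists t; split=> // t' Pt' sub x Jx.
  by apply: NNPP => nJx; apply: nogrow; exists (exist _ t' Pt'); split=> //; exists x.
pose chain n := iter n (fun t => sval (grow t)) (exist _ t0 Pt0).
have [N stable] := hN (fun n => J (sval (chain n))) (fun n => hJ _)
  (fun n => proj1 (svalP (grow (chain n)))).
have [x [Jx nJx]] := proj2 (svalP (grow (chain N))).
exact/nJx/(stable N.+1).
Qed.

Definition power_span (c y : K) n x :=
  exists b : nat -> K, (forall j, B (b j)) /\ x = \sum_(j < n.+1) b j * (c * y ^+ j).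

Lemma power_span_ideal c y n : (forall k, B (c * y ^+ k)) -> ideal_of B (power_span c y n).
Proof.
move=> Bcy; split.
- by move=> _ [b [Bb ->]]; apply: subring_sum => // j; apply: subringM.
- exists (fun=> 0); split=> [_|]; first exact: subring0.
  by rewrite big1 // => j _; rewrite mul0r.
- move=> _ _ [b [Bb ->]] [b' [Bb' ->]]; exists (fun j => b j + b' j).
  split=> [j|]; first exact: subringD.
  by rewrite -big_split; apply: eq_bigr => j _; rewrite mulrDl.
- move=> r _ Br [b [Bb ->]]; exists (fun j => r * b j); split=> [j|].
    exact: subringM.
  by rewrite mulr_sumr; apply: eq_bigr => j _; rewrite mulrA.
Qed.

Lemma power_span_succ c y n x : power_span c y n x -> power_span c y n.+1 x.
Proof.
move=> [b [Bb ->]]; exists (fun j => if (j < n.+1)%N then b j else 0).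
split=> [j|]; first by case: ifP => _ //; apply: subring0.
rewrite [RHS]big_ord_recr /= ltnn mul0r addr0.
by apply: eq_bigr => j _; rewrite /= ltn_ord.
Qed.

Lemma power_span_top c y n : power_span c y n (c * y ^+ n).
Proof.
exists (fun j => (j == n)%:R); split=> [j|].
  by case: (j == n); [apply: subring1 | apply: subring0].
rewrite big_ord_recr /= eqxx mul1r big1 ?add0r // => j _.
by rewrite /= ltn_eqF // mul0r.
Qed.

Hypotheses (hN : noetherian B) (hnorm : normal_domain B).

(* The chain [power_span c y n] stabilizes at some N, so c y^(N+1) is a
   B-combination of the c y^j, j <= N; cancelling c gives a monic equation. *)
Lemma almost_integral_mem y c : FracOf B y -> B c -> c != 0 ->
  (forall k, B (c * y ^+ k)) -> B y.
Proof.
move=> Fy Bc c_neq0 Bcy.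
have [N stable] := hN (fun n => power_span_ideal n Bcy) (@power_span_succ c y).
have [b [Bb e]] := stable _ (leqnSn N) _ (power_span_top c y N.+1).
pose p := \poly_(i < N.+2) (if i == N.+1 then 1 else - b i).
have size_p : size p = N.+2 by apply: size_poly_eq; rewrite eqxx oner_neq0.
apply: hnorm => //; exists p; split.
- by rewrite monicE lead_coefE size_p coef_poly ltnSn eqxx.
- move=> i; rewrite coef_poly; case: ifP => _; last exact: subring0.
  by case: ifP => _; [apply: subring1 | apply: subringN].
- rewrite /root horner_poly big_ord_recr /= eqxx mul1r.
  apply/eqP/(mulfI c_neq0); rewrite mulr0 mulrDr e mulr_sumr -big_split /=.
  by apply: big1 => j _; rewrite (ltn_eqF (ltn_ord j)); ring.
Qed.

Variable y : K.
Hypotheses (Fy : FracOf B y) (nBy : ~ B y).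

Lemma conductor_neq0 : exists2 c, conductor B y c & c != 0.
Proof.
have [a [c [Ba Bc c_neq0 ->]]] := Fy.
by exists c => //; split; rewrite // mulrC divfK.
Qed.

Lemma conductor_escape q : conductor B y q -> q != 0 ->
  exists k, conductor B y (q * y ^+ k) /\ ~ conductor B y (q * y ^+ k.+1).
Proof.
move=> Pq q_neq0; apply: NNPP => noescape.
apply/nBy/(almost_integral_mem Fy (proj1 Pq) q_neq0).
suff Pqy k : conductor B y (q * y ^+ k) by move=> k; case: (Pqy k).
elim: k => [|k IHk]; first by rewrite expr0 mulr1.
by apply: NNPP => nP; apply: noescape; exists k.
Qed.

Lemma conductor_prime :
  (forall u, B u -> ~ B (u * y) ->
     forall w, conductor B (u * y) w -> conductor B y w) ->
  prime_ideal_of B (conductor B y).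
Proof.
move=> ymax; split; first exact: conductor_ideal.
  by case; rewrite mul1r.
move=> u v Bu Bv [_ Buvy]; case: (classic (conductor B y u)) => [|nPu]; first by left.
right; apply: (ymax u) => //; first by move=> Buy; apply: nPu.
by split; rewrite // mulrA (mulrC v).
Qed.

(* Escaping P gives p0 in P with s = p0 y outside P, and w = q y^(l+1) in B
   outside P.  Then p0^(l+1) w = s^(l+1) q lies in Q, whence p0 in Q, and
   s p = (p y) p0 lies in Q, whence p in Q. *)
Lemma conductor_height_one :
  prime_ideal_of B (conductor B y) -> height_one_prime B (conductor B y).
Proof.
move=> Pprime; split=> //.
  by have [c] := conductor_neq0; exists c.
move=> Q Qprime [q [Qq q_neq0]] QP p Pp.
have [[_ _ _ QM] _ Qmul] := Qprime.
have [c Pc c_neq0] := conductor_neq0.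
have [k [[Bp0 Bs] nPs]] := conductor_escape Pc c_neq0.
rewrite exprSr mulrA in nPs.
set p0 := c * y ^+ k in Bp0 Bs nPs; set s := p0 * y in Bs nPs.
have [l [[_ Bw] nPw]] := conductor_escape (QP _ Qq) q_neq0.
rewrite exprSr mulrA in nPw; set w := q * y ^+ l * y in Bw nPw.
have Qp0 : Q p0.
  have : Q (p0 ^+ l.+1 * w).
    have shift a b : a ^+ l.+1 * (b * y ^+ l * y) = (a * y) ^+ l.+1 * b.
      by rewrite exprMn !exprS; ring.
    rewrite shift.
    by apply: QM => //; apply: subringX.
  case/(Qmul _ _ (subringX hB l.+1 Bp0) Bw); first exact: prime_ideal_pow.
  by move/QP.
have [Bp Bpy] := Pp.
have : Q (s * p) by rewrite /s -mulrA mulrC [y * p]mulrC; apply: QM.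
by case/(Qmul _ _ Bs Bp) => // /QP.
Qed.

End Conductor.

Lemma exists_height_one_conductor (K : fieldType) (B : K -> Prop) x :
  subring B -> noetherian B -> normal_domain B -> FracOf B x -> ~ B x ->
  exists P, height_one_prime B P /\ forall b, conductor B x b -> P b.
Proof.
move=> hB hN hnorm Fx nBx.
pose Fam z := exists b, [/\ B b, z = b * x & ~ B z].
have Fam_x : Fam x by exists 1; rewrite mul1r; split=> //; apply: subring1.
have [y [[b [Bb -> nBy]] ymax]] :=
  noetherian_max hN (conductor_ideal hB) Fam_x.
have Fy : FracOf B (b * x).
  have [a [c [Ba Bc c_neq0 ->]]] := Fx.
  by exists (b * a), c; rewrite mulrA; split=> //; apply: subringM.
exists (conductor B (b * x)); split; last by move=> u; apply: (conductor_mull hB).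
apply: conductor_height_one => //; apply: conductor_prime => // u Bu nBuy.
apply: ymax; first by exists (u * b); split; rewrite -?mulrA //; apply: (subringM hB).
by move=> w; apply: (conductor_mull hB).
Qed.

Lemma mem_of_forall_Loc (K : fieldType) (B : K -> Prop) (I : Type) (f : I -> K) z :
  subring B -> noetherian B -> normal_domain B ->
  (forall i, B (f i) /\ f i != 0) ->
  (forall P, height_one_prime B P -> exists i, ~ P (f i)) ->
  FracOf B z -> (forall i, Loc B (f i) z) -> B z.
Proof.
move=> hB hN hnorm hf hht Fz Lz; apply: NNPP => nBz.
have [P [hP condP]] := exists_height_one_conductor hB hN hnorm Fz nBz.
have [i nPf] := hht P hP; have [Bf f_neq0] := hf i.
have [s [n [Bs ez]]] := Lz i.
apply/nPf/(prime_ideal_pow hB (k := n)) => //; first by case: hP.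
apply: condP; split; first exact: subringX.
by rewrite ez mulrC divfK // expf_neq0.
Qed.

Theorem lemma3p5 (K : fieldType) (A B : K -> Prop) (I : Type) (f : I -> K) :
  subring B -> noetherian B -> normal_domain B ->
  subring A -> (forall x, A x -> B x) ->
  EXT (FracOf A) (FracOf B) ->
  (forall i, A (f i) /\ f i != 0) ->
  (forall i, EXT (Loc A (f i)) (Loc B (f i))) ->
  (forall P, height_one_prime B P -> exists i, ~ P (f i)) ->
  EXT A B.
Proof.
move=> hB hN hnorm hA AB hEXT hf hloc hht d hd.
have [D hD] := EXT_FracOf_extension hA AB hd hEXT.
have [hDF Dd Duniq] := hD.
have Bf i : B (f i) /\ f i != 0 by have [Af f_neq0] := hf i; split=> //; apply: AB.
have DB b : B b -> B (D b).
  move=> Bb; apply: (mem_of_forall_Loc hB hN hnorm Bf hht).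
    by have [DF _ _] := hDF; apply/DF/(subring_FracOf hB).
  move=> i; have [Af f_neq0] := hf i.
  exact/(unique_frac_extension_Loc_stable hA hB AB hd hD Af f_neq0 (hloc i))/subring_Loc.
exists D; split=> [|a Aa|D' hD' D'd y By].
- exact: is_derivation_restr (subring_FracOf hB) DB hDF.
- exact: Dd.
- rewrite -(frac_der_id hB hD' By); apply: Duniq (subring_FracOf hB By).
    exact: frac_der_is_derivation.
  by move=> a Aa; rewrite frac_der_id ?D'd //; apply: AB.
Qed.
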